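(* Let $\mathcal{F}=(W,\preceq,\mathcal{V})$ be a finite poset model and $B\subseteq W\times W$ a weak $\pm$-bisimulation. For all $w_1,w_2$ with $B(w_1,w_2)$ and every $\downarrow$-path $\pi_1:[0;k_1]\to W$ from $w_1$, there is a $\downarrow$-path $\pi_2:[0;k_2]\to W$ from $w_2$ such that $B(\pi_1(k_1),\pi_2(k_2))$ and for each $j\in[0;k_2)$ there is $i\in[0;k_1)$ with $B(\pi_1(i),\pi_2(j))$.
   Context: Fix a set PL of proposition letters. A poset model is $\mathcal{F}=(W,\preceq,\mathcal{V})$ with $(W,\preceq)$ a partial order and $\mathcal{V}:\mathrm{PL}\to\mathcal{P}(W)$. $[m;n]=\{i\in\mathbb{N}:m\le i\le n\}$, $[m;n)=\{i:m\le i<n\}$. An undirected path of length $\ell$ from $w$ is $\pi:[0;\ell]\to W$ with $\pi(0)=w$ and, for each $i\in[0;\ell)$, $\pi(i)\preceq\pi(i+1)$ or $\pi(i+1)\preceq\pi(i)$. A $\downarrow$-path is an undirected path of length $\ell\ge1$ with $\pi(\ell)\preceq\pi(\ell-1)$. A $\pm$-path is a $\downarrow$-path of length $\ell\ge2$ with $\pi(0)\preceq\pi(1)$. A weak $\pm$-bisimulation is a symmetric relation $B\subseteq W\times W$ such that whenever $B(w_1,w_2)$: (1) for every $p\in\mathrm{PL}$, $w_1\in\mathcal{V}(p)$ iff $w_2\in\mathcal{V}(p)$; (2) for all $u_1,d_1\in W$ with ($w_1\preceq u_1$ or $u_1\preceq w_1$) and $d_1\preceq u_1$, there is a $\pm$-path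 $\pi_2:[0;\ell_2]\to W$ from $w_2$ with $B(d_1,\pi_2(\ell_2))$ and, for all $j\in[0;\ell_2)$, $B(w_1,\pi_2(j))$ or $B(u_1,\pi_2(j))$. *)

From mathcomp Require Import all_boot.
Set Implicit Arguments.
Unset Strict Implicit.
Unset Printing Implicit Defensive.

Record poset_model (PL : Type) (W : Type) := PosetModel {
  le : W -> W -> Prop;
  V : PL -> W -> Prop;
  le_refl : forall w, le w w;
  le_trans : forall u v w, le u v -> le v w -> le u w;
  le_antisym : forall u v, le u v -> le v u -> u = v
}.

(* An undirected path of length l from w, represented by pi : nat -> W,
   only values on [0; l] matter. *)
Definition undirected_path PL W (F : poset_model PL W) (w : W) (pi : nat -> W) (l : nat) : Prop :=
  pi 0 = w /\
  forall i, i < l -> le F (pi i) (pi i.+1) \/ le F (pi i.+1) (pi i).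

Definition down_path PL W (F : poset_model PL W) (w : W) (pi : nat -> W) (l : nat) : Prop :=
  undirected_path F w pi l /\ 1 <= l /\ le F (pi l) (pi l.-1).

Definition pm_path PL W (F : poset_model PL W) (w : W) (pi : nat -> W) (l : nat) : Prop :=
  down_path F w pi l /\ 2 <= l /\ le F (pi 0) (pi 1).

Definition weak_pm_bisimulation PL W (F : poset_model PL W) (B : W -> W -> Prop) : Prop :=
  (forall x y, B x y -> B y x) /\
  forall w1 w2, B w1 w2 ->
    (forall p, V F p w1 <-> V F p w2) /\
    (forall u1 d1, (le F w1 u1 \/ le F u1 w1) -> le F d1 u1 ->
       exists (pi2 : nat -> W) (l2 : nat),
         pm_path F w2 pi2 l2 /\ B d1 (pi2 l2) /\
         forall j, j < l2 -> B w1 (pi2 j) \/ B u1 (pi2 j)).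

From mathcomp Require Import all_boot.
From mathcomp Require Import zify.

Set Implicit Arguments.
Unset Strict Implicit.
Unset Printing Implicit Defensive.

(* Walk along the given down-path one edge at a time.  An edge from x to x'
   is matched by the ±-path that the bisimulation provides for u1 = d1 = x'
   from a partner of x; gluing these gives an undirected path whose points
   are all related to points of the prefix already walked.  The final
   down-edge from x to x' is matched by taking u1 = x and d1 = x': the
   resulting ±-path ends with a down-step, so the glued path is a down-path. *)

Section Concatenation.

Variable W : Type.

Definition catp (p : nat -> W) (L : nat) (q : nat -> W) : nat -> W :=
  fun n => if n <= L then p n else q (n - L).

Lemma catp_l p L q n : n <= L -> catp p L q n = p n.
Proof. by rewrite /catp => ->. Qed.

Lemma catp_r p L q n : q 0 = p L -> L <= n -> catp p L q n = q (n - L).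
Proof.
rewrite /catp => q0 Ln; case: ifP => // nL.
have -> : n = L by apply/eqP; rewrite eqn_leq nL Ln.
by rewrite subnn q0.
Qed.

Lemma catp_cover (P : W -> Prop) p L q M :
  (forall j, j <= L -> P (p j)) -> (forall j, j < M -> P (q j)) ->
  forall j, j < L + M -> P (catp p L q j).
Proof.
move=> Pp Pq j jLM; rewrite /catp; case: ifP => [/Pp //|/negbT].
by rewrite -ltnNge => Lj; apply: Pq; lia.
Qed.

Variables (PL : Type) (F : poset_model PL W).

Lemma undirected_path_cat w p L q M :
  undirected_path F w p L -> undirected_path F (p L) q M ->
  undirected_path F w (catp p L q) (L + M).
Proof.
move=> [p0 pstep] [q0 qstep]; split; first by rewrite catp_l.
move=> i iLM; have [Li | iL] := leqP L i.
  rewrite !(catp_r q0) ?subSn //; last exact: leqW.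
  by apply: qstep; lia.
rewrite catp_l ?(ltnW iL) //.
have [iL' | ] := ltnP i.+1 L; first by rewrite catp_l ?(ltnW iL') //; apply: pstep.
move=> Li; have Ei : i.+1 = L by lia.
by rewrite (catp_r q0) ?Li // Ei subnn q0 -Ei; apply: pstep.
Qed.

Lemma down_path_cat w p L q M :
  undirected_path F w p L -> down_path F (p L) q M ->
  down_path F w (catp p L q) (L + M).
Proof.
move=> hp [hq [M1 qlast]]; split; first exact: undirected_path_cat.
have q0 : q 0 = p L by case: hq.
split; first lia.
rewrite !(catp_r q0); try lia.
have -> : (L + M).-1 - L = M.-1 by lia.
by rewrite addKn.
Qed.

End Concatenation.

Section Simulation.

Variables (PL : Type) (W : Type) (F : poset_model PL W) (B : W -> W -> Prop).
Hypothesis bisimB : weak_pm_bisimulation F B.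

Lemma bisim_step x x' y : B x y -> le F x x' \/ le F x' x ->
  exists q M, undirected_path F y q M /\ B x' (q M) /\
    forall j, j < M -> B x (q j) \/ B x' (q j).
Proof.
move=> Bxy xx'; have [_ zigzag] := bisimB.2 _ _ Bxy.
have [q [M [[[hq _] _] [Bq cover]]]] := zigzag x' x' xx' (le_refl _ _).
by exists q, M.
Qed.

Lemma bisim_down_step x x' y : B x y -> le F x' x ->
  exists q M, down_path F y q M /\ B x' (q M) /\ forall j, j < M -> B x (q j).
Proof.
move=> Bxy x'x; have [_ zigzag] := bisimB.2 _ _ Bxy.
have [q [M [[hq _] [Bq cover]]]] := zigzag x x' (or_introl (le_refl _ _)) x'x.
by exists q, M; do 2!split => //; move=> j /cover [].
Qed.

Variables (w2 : W) (pi1 : nat -> W) (k : nat).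
Hypothesis Bstart : B (pi1 0) w2.
Hypothesis pi1_step : forall i, i < k -> le F (pi1 i) (pi1 i.+1) \/ le F (pi1 i.+1) (pi1 i).

Lemma prefix_simulation m : m <= k ->
  exists p L, undirected_path F w2 p L /\ B (pi1 m) (p L) /\
    forall j, j < L -> exists i, i <= m /\ B (pi1 i) (p j).
Proof.
elim: m => [_ | m IH mk].
  by exists (fun=> w2), 0; do 2!split => //.
have [p [L [hp [Bend cover]]]] := IH (ltnW mk).
have [q [M [hq [Bq qcover]]]] := bisim_step Bend (pi1_step mk).
have q0 : q 0 = p L by case: hq.
exists (catp p L q), (L + M); split; first exact: undirected_path_cat.
split; first by rewrite (catp_r q0) ?leq_addr // addKn.
move=> j; apply: (catp_cover (P := fun z => exists i, i <= m.+1 /\ B (pi1 i) z)) => {}j.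
- rewrite leq_eqVlt => /orP[/eqP -> | /cover [i [im Bi]]].
    by exists m.
  by exists i; split => //; apply: leqW.
- by move=> /qcover [Bj | Bj]; [exists m | exists m.+1]; split.
Qed.

End Simulation.

Theorem lemma9 (PL : Type) (W : finType) (F : poset_model PL W)
  (B : W -> W -> Prop) :
  weak_pm_bisimulation F B ->
  forall (w1 w2 : W), B w1 w2 ->
  forall (pi1 : nat -> W) (k1 : nat), down_path F w1 pi1 k1 ->
  exists (pi2 : nat -> W) (k2 : nat),
    down_path F w2 pi2 k2 /\ B (pi1 k1) (pi2 k2) /\
    forall j, j < k2 -> exists i, i < k1 /\ B (pi1 i) (pi2 j).
Proof.
move=> bisimB w1 w2 B12 pi1 k1 [[pi10 pi1_step] [k1_pos last_down]].
have Bstart : B (pi1 0) w2 by rewrite pi10.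
have [p [L [hp [Bend cover]]]] :=
  prefix_simulation bisimB Bstart pi1_step (leq_pred k1).
have [q [M [hq [Bq qcover]]]] := bisim_down_step bisimB Bend last_down.
have q0 : q 0 = p L by case: hq => -[].
have k1_pred : k1.-1 < k1 by lia.
exists (catp p L q), (L + M); split; first exact: down_path_cat.
split; first by rewrite (catp_r q0) ?leq_addr // addKn.
move=> j; apply: (catp_cover (P := fun z => exists i, i < k1 /\ B (pi1 i) z)) => {}j.
- rewrite leq_eqVlt => /orP[/eqP -> | /cover [i [ik Bi]]].
    by exists k1.-1.
  by exists i; split => //; apply: leq_ltn_trans k1_pred.
- by move=> /qcover Bj; exists k1.-1.
Qed.
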